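(* Let $W$ be a finite set, $\mathtt{N}=\{N_1,\ldots,N_r\}$ a sequence of subsets of $W$, and $w\in W$. Then $$\mathrm{lk}_{K(\mathtt{N})}(w)=K(\mathtt{N}_w),\qquad\mathrm{dl}_{K(\mathtt{N})}(w)=K(\widehat{\mathtt{N}}_w)*\Delta^{A_w}.$$
   Context: For a sequence $\mathtt{N}=\{N_1,\ldots,N_r\}$ of subsets of a finite ground set $W$ (repetitions allowed), choose distinct points $a_1,\ldots,a_r\notin W$, set $\widetilde{N}_i=N_i\sqcup\{a_i\}$; $K(\mathtt{N})$ is the simplicial complex on $W\sqcup\{a_1,\ldots,a_r\}$ whose minimal non-faces are exactly $\widetilde{N}_1,\ldots,\widetilde{N}_r$. Define $\mathtt{N}_w=\{N_i-\{w\}\mid i=1,\ldots,r\}$ and $\widehat{\mathtt{N}}_w=\{N_i\mid w\notin N_i\}$, both with ground set $W-\{w\}$, and $A_w=\{a_i\mid w\in N_i\}$; in forming $K(\mathtt{N}_w)$ and $K(\widehat{\mathtt{N}}_w)$ the new point attached to (the set coming from) $N_i$ is the same $a_i$. $\mathrm{lk}_K(w)=\{\tau\in K\mid w\notin\tau,\ \tau\cup\{w\}\in K\}$ and $\mathrm{dl}_K(w)=\{\tau\in K\mid w\notin\tau\}$; $\Delta^S$ is the full simplex on $S$ and $*$ is the join. *)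

From mathcomp Require Import all_boot.
Set Implicit Arguments. Unset Strict Implicit. Unset Printing Implicit Defensive.

(* K(N) for the family (N_i)_{i in I} on ground set W, with new points a_i:
   the complex on W ⊔ {a_i | i in I} whose minimal non-faces are
   Ñ_i = N_i ⊔ {a_i}; i.e. faces are the subsets of the vertex set
   containing no Ñ_i. The index set I allows subfamilies (as for N̂_w)
   while keeping the same attached point a_i. *)
Definition Kcx (T : finType) (r : nat) (W : {set T}) (I : {set 'I_r})
    (a : 'I_r -> T) (N : 'I_r -> {set T}) : {set {set T}} :=
  [set s : {set T} | (s \subset W :|: a @: I) &&
     [forall i in I, ~~ (a i |: N i \subset s)]].

Definition link (T : finType) (K : {set {set T}}) (w : T) : {set {set T}} :=
  [set t in K | (w \notin t) && (w |: t \in K)].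

Definition deletion (T : finType) (K : {set {set T}}) (w : T) : {set {set T}} :=
  [set t in K | w \notin t].

Definition join (T : finType) (K L : {set {set T}}) : {set {set T}} :=
  [set s :|: t | s in K, t in L].

Definition full_simplex (T : finType) (S : {set T}) : {set {set T}} :=
  powerset S.

From mathcomp Require Import all_boot.

Set Implicit Arguments.
Unset Strict Implicit.
Unset Printing Implicit Defensive.

(* A face containing [w] contains
   [Ñ_i] exactly when the face minus [w] contains [Ñ_i :\ w], which gives the
   link.  A face avoiding [w] can never contain [Ñ_i] when [w \in N_i], so for
   those [i] the new point [a_i] is a free vertex, and a complex with a set of
   free vertices is the join of the rest with the simplex on them. *)

Section KcxFaces.

Variables (T : finType) (r : nat) (a : 'I_r -> T).
Implicit Types (W V F A s t : {set T}) (I J : {set 'I_r}) (N : 'I_r -> {set T}) (w x : T).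

Definition no_nonface I N s :=
  [forall i in I, ~~ (a i |: N i \subset s)].

Lemma mem_Kcx W I N s :
  (s \in Kcx W I a N) = (s \subset W :|: a @: I) && no_nonface I N s.
Proof. by rewrite inE. Qed.

Lemma no_nonfaceS I N s t :
  t \subset s -> no_nonface I N s -> no_nonface I N t.
Proof.
move=> ts /forall_inP sN; apply/forall_inP => i iI.
by apply: contra (sN i iI) => /subset_trans; apply.
Qed.

Lemma Kcx_subset_closed W I N s t :
  t \subset s -> s \in Kcx W I a N -> t \in Kcx W I a N.
Proof.
rewrite !mem_Kcx => ts /andP[sV sN].
by rewrite (subset_trans ts sV) (no_nonfaceS ts sN).
Qed.

Lemma setU1D1_subset x w A t :
  x != w -> (x |: A :\ w \subset t) = (x |: A \subset w |: t).
Proof.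
move=> xw; rewrite -subDset; suff -> : x |: A :\ w = (x |: A) :\ w by [].
by apply/setP => y; rewrite !inE; case: (eqVneq y x) => [->|]; rewrite ?xw.
Qed.

Lemma no_nonface_setU1 I N w t :
  w \notin a @: I ->
  no_nonface I N (w |: t) = no_nonface I (fun i => N i :\ w) t.
Proof.
move=> wI; apply: eq_forallb_in => i iI; rewrite setU1D1_subset //.
by apply: contraNneq wI => <-; apply: imset_f.
Qed.

Lemma no_nonface_notin I N w s :
  w \notin s -> no_nonface I N s = no_nonface [set i in I | w \notin N i] N s.
Proof.
move=> ws; apply/forall_inP/forall_inP => sN i; first by rewrite inE => /andP[/sN].
move=> iI; have [wN | /negPf wN] := boolP (w \in N i).
  by apply: contra ws => /subsetP; apply; rewrite !inE wN orbT.
by apply: sN; rewrite inE iI wN.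
Qed.

Lemma notin_imset_out W I w :
  (forall i, a i \notin W) -> w \in W -> w \notin a @: I.
Proof. by move=> aW wW; apply/imsetP => -[i _ wa]; move: (aW i); rewrite -wa wW. Qed.

Lemma link_Kcx W I N w :
  w \in W -> w \notin a @: I ->
  link (Kcx W I a N) w = Kcx (W :\ w) I a (fun i => N i :\ w).
Proof.
move=> wW wI; have VD1 : W :\ w :|: a @: I = (W :|: a @: I) :\ w.
  rewrite setDUl; congr (_ :|: _).
  by apply/esym/setDidPl; rewrite disjoint_sym disjoints1.
apply/setP => t; rewrite inE [RHS]mem_Kcx VD1 subsetD1 -no_nonface_setU1 //.
have [wt | wt] := boolP (w \in t); rewrite ?andbF //= andbT.
rewrite (andb_idl (Kcx_subset_closed (subsetUr [set w] t))).
by rewrite mem_Kcx subUset sub1set inE wW.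
Qed.

Lemma Kcx_join_simplex V J N F :
  (forall i, i \in J -> [disjoint a i |: N i & F]) ->
  join (Kcx V J a N) (full_simplex F)
    = [set s : {set T} | (s \subset (V :|: a @: J) :|: F) && no_nonface J N s].
Proof.
move=> dF; apply/setP => s; rewrite inE; apply/imset2P/andP.
  case=> t u; rewrite mem_Kcx powersetE => /andP[tV tN] uF ->.
  split; first exact: setUSS.
  apply/forall_inP => i iJ; apply: contra (forall_inP tN i iJ).
  move/subsetP=> iNtu; apply/subsetP => x xNi.
  case/setUP: (iNtu x xNi) => // /(subsetP uF) xF.
  by rewrite (disjointFr (dF i iJ) xNi) in xF.
case=> sVF sN; exists (s :\: F) (s :&: F); last by rewrite setUC setID.
  rewrite mem_Kcx subDset setUC sVF.
  exact: no_nonfaceS (subsetDl s F) sN.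
by rewrite powersetE subsetIr.
Qed.

Lemma deletion_Kcx W I N w :
  (forall i, N i \subset W) -> injective a -> (forall i, a i \notin W) ->
  w \in W ->
  deletion (Kcx W I a N) w
    = join (Kcx (W :\ w) [set i in I | w \notin N i] a N)
           (full_simplex (a @: [set i in I | w \in N i])).
Proof.
move=> NW a_inj aW wW; rewrite Kcx_join_simplex; last first.
  move=> i; rewrite inE => /andP[_ wNi].
  rewrite disjoints_subset; apply/subsetP => x.
  case/setU1P=> [-> | /(subsetP (NW i)) xW]; rewrite inE; apply/imsetP => -[j].
    by rewrite inE => /andP[_ wNj] /a_inj ij; rewrite ij wNj in wNi.
  by move=> _ xj; rewrite xj (negPf (aW j)) in xW.
have -> : (W :\ w :|: a @: [set i in I | w \notin N i]) :|: a @: [set i in I | w \in N i]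
          = (W :|: a @: I) :\ w.
  rewrite -setUA -imsetU.
  have -> : [set i in I | w \notin N i] :|: [set i in I | w \in N i] = I.
    by apply/setP => i; rewrite !inE; case: (i \in I); case: (w \in N i).
  suff /setDidPl aID1 : [disjoint a @: I & [set w]] by rewrite setDUl aID1.
  by rewrite disjoint_sym disjoints1 (notin_imset_out _ aW wW).
apply/setP => s; rewrite inE mem_Kcx [RHS]inE subsetD1.
have [ws | ws] /= := boolP (w \in s); first by rewrite !andbF.
by rewrite !andbT -(no_nonface_notin _ _ ws).
Qed.

End KcxFaces.

Theorem lemma4p1 (T : finType) (W : {set T}) (r : nat)
    (N : 'I_r -> {set T}) (a : 'I_r -> T) (w : T)
    (HN : forall i, N i \subset W)
    (Ha_inj : injective a) (Ha_out : forall i, a i \notin W)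
    (Hw : w \in W) :
  link (Kcx W [set: 'I_r] a N) w
    = Kcx (W :\ w) [set: 'I_r] a (fun i => N i :\ w)
  /\
  deletion (Kcx W [set: 'I_r] a N) w
    = join (Kcx (W :\ w) [set i | w \notin N i] a N)
           (full_simplex (a @: [set i | w \in N i])).
Proof.
split; first exact: link_Kcx Hw (notin_imset_out _ Ha_out Hw).
by rewrite deletion_Kcx // !setIdE !setTI.
Qed.
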